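(* For every $m\in\mathbb N$ and every choice of $A_\ell$, $J_\ell$, $\ell=1,\ldots,m$, as in the context, and every $n\in\mathbb N$, \[\left|\mathbb P\left(\bigcap_{\ell=1}^m\mathscr W_{J_{n,\ell}}\left(A^{(q_n)}_{n,\ell}\right)\right)-\mathbb P\left(\bigcap_{\ell=1}^m\mathscr W_{J_{n,\ell}}\left(A_{n,\ell}\right)\right)\right|\leq q_n\sum_{\ell=1}^m\mathbb P(A_{n,\ell}).\]
   Context: Let $\mathbf X_0,\mathbf X_1,\ldots$ be a stationary sequence of random vectors in $\mathcal V=\mathbb R^d$, identified with the coordinate process on $(\mathcal V^{\mathbb N_0},\mathcal B^{\mathbb N_0},\mathbb P)$, with $\sigma$ the (measure-preserving) left shift $\sigma((x_i)_i)=(x_{i+1})_i$. Let $u_n:(0,\infty)\to(0,\infty)$ be normalising threshold functions (nonincreasing, left continuous, with $n\mathbb P(\|\mathbf X_0\|>u_n(\tau))\to\tau$ for every $\tau>0$), and set $u_n^{-1}(z)=\sup\{\tau>0: z\le u_n(\tau)\}$. Let $(k_n)$, $(t_n)$, $(q_n)$ be sequences of positive integers with $k_n,t_n\to\infty$, $k_nt_n=o(n)$, $r_n:=\lfloor n/k_n\rfloor\to\infty$ and $q_n=o(r_n)$. For an event $A$ and an interval $J\subset[0,\infty)$ let $\mathscr W_J(A)=\bigcap_{i\in J\cap\mathbb N_0}\sigma^{-i}(A^c)$ (no occurrence of $A$ at times in $J$), and for $j\in\mathbb N$ let $A^{(j)}=A\cap\sigma^{-1}(A^c)\cap\cdots\cap\sigma^{-j}(A^c)$.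 Let $\mathscr F$ be the field of cylinder sets $\{(x_j)_j: x_j\in H_j,\ j=0,\ldots,m\}$ with $H_j$ Borel in $\mathcal V$, $m\in\mathbb N$. For $\ell=1,\ldots,m$ take $A_\ell\in\mathscr F$ and $J_\ell=[a_\ell,b_\ell)$ with $0\le a_1<b_1\le a_2<\cdots\le a_m<b_m\le1$, and define $J_{n,\ell}=\big[(\lceil k_na_\ell\rceil-1)r_n,(\lfloor k_nb_\ell\rfloor+1)r_n\big)$ and $A_{n,\ell}=\left\{\left(u_n^{-1}(\|\mathbf X_j\|)\frac{\mathbf X_j}{\|\mathbf X_j\|}\right)_j\in A_\ell\right\}$, with $A^{(q_n)}_{n,\ell}=(A_{n,\ell})^{(q_n)}$. *)

From HB Require Import structures.
From mathcomp Require Import all_boot all_order all_algebra.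
From mathcomp Require Import all_classical all_reals all_analysis.
Set Implicit Arguments. Unset Strict Implicit. Unset Printing Implicit Defensive.
Import Order.TTheory GRing.Theory Num.Theory.
Import numFieldNormedType.Exports.
Local Open Scope classical_set_scope.
Local Open Scope ring_scope.

Section Defs.
Variables (R : realType) (d : nat).
Local Notation V := 'rV[R]_d.

Definition is_norm (nrm : V -> R) : Prop :=
  [/\ forall x, 0 <= nrm x,
      forall x, nrm x = 0 -> x = 0,
      forall (c : R) x, nrm (c *: x) = `|c| * nrm x
    & forall x y, nrm (x + y) <= nrm x + nrm y].

Definition borelV : set (set V) := <<s (@open V) >>.

Definition cylinder (A : set (nat -> V)) : Prop :=
  exists (m : nat) (H : nat -> set V),
    (forall j, borelV (H j)) /\
    A = [set x | forall j, (j <= m)%N -> H j (x j)].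

Definition seqV := g_sigma_algebraType cylinder.

Definition sshift (x : nat -> V) : nat -> V := fun k => x k.+1.

Definition shiftpre (i : nat) (A : set (nat -> V)) : set (nat -> V) :=
  (iter i (@sshift)) @^-1` A.

(* W_J(A) for J = [lo, hi) with integer endpoints: no occurrence of A at
   times i in J /\ N0. *)
Definition W (lo hi : int) (A : set (nat -> V)) : set (nat -> V) :=
  \bigcap_(i in [set i : nat | (lo <= i%:Z)%R /\ (i%:Z < hi)%R])
     shiftpre i (~` A).

Definition Aj (j : nat) (A : set (nat -> V)) : set (nat -> V) :=
  A `&` \bigcap_(i in [set i : nat | (1 <= i <= j)%N]) shiftpre i (~` A).

Definition uinv (u : R -> R) (z : R) : R :=
  fine (ereal_sup [set (t%:E)%E | t in [set t : R | 0 < t /\ z <= u t]]).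

Definition transf (nrm : V -> R) (u : R -> R) (x : nat -> V) : nat -> V :=
  fun j => (uinv u (nrm (x j)) / nrm (x j)) *: x j.

Definition Anl (nrm : V -> R) (u : R -> R) (A : set (nat -> V)) :
  set (nat -> V) := transf nrm u @^-1` A.

Definition Jlo (k r : nat) (a : R) : int := (Num.ceil (k%:R * a) - 1) * r%:Z.
Definition Jhi (k r : nat) (b : R) : int := (Num.floor (k%:R * b) + 1) * r%:Z.

End Defs.

(* Suppose a path avoids A^(q) on a window [lo, h) but meets A there, and let
   i be the last time of the window at which A occurs.  Since A^(q) fails at
   i, A occurs again within q steps, necessarily after the window; hence
   i = h - j - 1 for some j < q.  So the difference of the two events lies in
   the union of the sigma^-(h_l - j - 1) A_{n,l} over l and j < q, whose
   probability is at most q sum_l P(A_{n,l}) by stationarity and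
   subadditivity.  The remaining work is measurability: A_{n,l} is again a
   cylinder because v |-> u_n^-1(|v|) v / |v| is Borel, being a measurable
   scalar function times the identity. *)

From HB Require Import structures.
From mathcomp Require Import all_boot all_order all_algebra.
From mathcomp Require Import all_classical all_reals all_analysis.
From mathcomp Require Import measurable_realfun lra zify.
Import Order.TTheory GRing.Theory Num.Theory.
Import numFieldNormedType.Exports.
Local Open Scope classical_set_scope.
Local Open Scope ring_scope.

Local Notation borel T := (g_sigma_algebraType (@open T)).

Section borel_measurable.
Variable R : realType.

Lemma continuous_borel_measurable (T : ptopologicalType) (f : T -> R) :
  continuous f -> measurable_fun (setT : set (borel T)) f.
Proof.
move=> /continuousP cf.
apply: (@measurability _ _ (borel T) R _ _ _ (RGenOpens.measurableE R)).
move=> _ [_ [a [b ->]] <-]; rewrite setTI.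
by apply: sub_sigma_algebra; apply/cf/interval_open.
Qed.

Lemma inv_measurable : measurable_fun (setT : set R) (@GRing.inv R).
Proof.
rewrite -(setUv [set 0]) measurable_funU //; last exact: measurableC.
split; first exact: measurable_fun_set1.
apply: open_continuous_measurable_fun.
  exact/closed_openC/accessible_closed_set1/hausdorff_accessible/Rhausdorff.
by move=> x /set_mem/eqP x0; apply: inv_continuous.
Qed.

Lemma nonincreasing_emeasurable (F : R -> \bar R) :
  {homo F : x y /~ (x <= y)%O} -> measurable_fun setT F.
Proof.
move=> F_ni.
apply: (@measurability _ _ R (\bar R) _ _ _ (ErealGenOInfty.measurableE R)).
move=> _ [_ [r ->] <-]; rewrite setTI; apply: is_interval_measurable.
move=> x y /=; rewrite !in_itv /= !andbT => _ Fy z /andP[_ zy].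
by rewrite in_itv /= andbT (lt_le_trans Fy (F_ni _ _ zy)).
Qed.

End borel_measurable.

Section scale_measurable.
Variables (R : realType) (V : normedModType R).

Let open_borel (A : set V) : open A -> measurable (A : set (borel V)).
Proof. exact: sub_sigma_algebra. Qed.

Lemma closed_scale_ball_sub (U : set V) (q r : R) :
  closed [set w : V | ball (q *: w) r `<=` U].
Proof.
rewrite -[X in closed X]setCK; apply: open_closedC.
have -> : ~` [set w : V | ball (q *: w) r `<=` U] =
    \bigcup_(y in ~` U) ( *:%R q @^-1` ball y r).
  apply/seteqP; split => w /=.
    by move=> /existsNP[y /not_implyP[wy Uy]]; exists y => //; exact: ball_sym.
  by move=> [y Uy /ball_sym wy] /(_ y wy).
apply: bigcup_open => y _; apply: open_comp; last exact: ball_open.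
by move=> w _; exact: scaler_continuous.
Qed.

(* Approximating [c v] by a rational [q] within [d] moves [c v *: v] by less
   than [d M] when [|v| < M]; the closed condition on [ball (q *: v) (d M)]
   absorbs this error. *)
Lemma measurable_funZ_borel (c : borel V -> R) :
  measurable_fun setT c ->
  measurable_fun setT ((fun v => c v *: v) : borel V -> borel V).
Proof.
move=> mc; apply: (@measurability _ _ (borel V) (borel V) setT _ (@open V)) => //.
move=> _ [U oU <-]; rewrite setTI.
pose S (N M : nat) (q : rat) : set V :=
  let d : R := N.+1%:R^-1 in
  (c @^-1` ball (ratr q : R) d) `&` ball 0 M%:R `&`
  [set w | ball (ratr q *: w) (d * M%:R) `<=` U].
have -> : (fun v => c v *: v) @^-1` U = \bigcup_N \bigcup_M \bigcup_q S N M q.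
  apply/seteqP; split => [v Uv|v [N _ [M _ [q _ [[cv vM] K]]]]]; last first.
    apply: K; rewrite -ball_normE /= -scalerBl normrZ.
    move: cv vM; rewrite -!ball_normE /= sub0r normrN => cv vM.
    by rewrite ltr_pM.
  have [e e0 vU] : exists2 e : R, 0 < e & ball (c v *: v) e `<=` U.
    by have /nbhs_ballP[e e0 ?] := open_nbhs_nbhs (conj oU Uv); exists e.
  pose M := (Num.truncn `|v|).+1.
  pose N := Num.truncn (2 * M%:R / e).
  have vM : `|v| < M%:R by exact: truncnS_gt.
  have NM : 2 * M%:R / e < N.+1%:R by exact: truncnS_gt.
  pose d : R := N.+1%:R^-1.
  have d0 : 0 < d by rewrite invr_gt0.
  have dM : d * M%:R < e / 2.
    rewrite mulrC ltr_pdivrMr ?ltr0n //.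
    by move: NM; rewrite ltr_pdivrMr // => NM; nra.
  have [q] : exists q, ratr q \in `]c v - d, c v + d[ by apply: rat_in_itvoo; lra.
  rewrite in_itv /= => /andP[q1 q2].
  exists N => //; exists M => //; exists q => //; split; first split.
  - by rewrite /= -ball_normE /= -/d ltr_norml; apply/andP; split; lra.
  - by rewrite -ball_normE /= sub0r normrN.
  move=> y; rewrite -/d -ball_normE /= => qy; apply: vU; rewrite -ball_normE /=.
  have cq : `|c v *: v - ratr q *: v| < d * M%:R.
    by rewrite -scalerBl normrZ ltr_pM // ltr_norml; apply/andP; split; lra.
  by apply: le_lt_trans (ler_distD (ratr q *: v) _ _) _; lra.
apply: bigcupT_measurable => N; apply: bigcupT_measurable => M.
apply: bigcupT_measurable_rat => q; apply: measurableI; first apply: measurableI.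
- rewrite -[X in measurable X]setTI; apply: mc => //.
  by apply: open_measurable; exact: ball_open.
- by apply: open_borel; exact: ball_open.
- rewrite -[X in measurable X]setCK; apply: measurableC; apply: open_borel.
  by apply: closed_openC; exact: closed_scale_ball_sub.
Qed.

End scale_measurable.

Section is_norm.
Variables (R : realType) (d : nat) (nrm : 'rV[R]_d -> R).
Hypothesis nrm_norm : is_norm nrm.

Lemma is_norm0 : nrm 0 = 0.
Proof.
by case: nrm_norm => _ _ nrmZ _; rewrite -(scale0r 0) nrmZ normr0 mul0r.
Qed.

Lemma is_normB (x y : 'rV[R]_d) : nrm (x - y) = nrm (y - x).
Proof.
by case: nrm_norm => _ _ nrmZ _; rewrite -opprB -scaleN1r nrmZ normrN1 mul1r.
Qed.

Lemma is_norm_dist (x y : 'rV[R]_d) : `|nrm x - nrm y| <= nrm (x - y).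
Proof.
case: nrm_norm => _ _ _ nrmD.
have := nrmD (x - y) y; have := nrmD (y - x) x.
rewrite !subrK is_normB ler_norml; lra.
Qed.

Lemma is_norm_le_mx_norm : exists2 C : R, 0 < C & forall x, nrm x <= C * `|x|.
Proof.
case: nrm_norm => nrm_ge0 _ nrmZ nrmD.
exists (1 + \sum_(i < d) nrm 'e_i); first by rewrite ltr_pwDl // sumr_ge0.
move=> x; rewrite {1}(row_sum_delta x).
apply: le_trans (_ : _ <= \sum_(i < d) `|x| * nrm 'e_i) _.
  apply: (big_ind2 (fun a b => nrm a <= b)) => [|a b c e ab ce|i _].
  - by rewrite is_norm0.
  - exact: le_trans (nrmD _ _) (lerD ab ce).
  rewrite nrmZ ler_wpM2r //; change (`|x 0 i| <= mx_norm x).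
  by rewrite mx_normrE; exact: (le_bigmax _ (fun ij => `|x ij.1 ij.2|) (0, i)).
by rewrite -mulr_sumr [X in _ <= X]mulrC ler_wpM2l // lerDr.
Qed.

Lemma is_norm_continuous : continuous nrm.
Proof.
have [C C0 nrmC] := is_norm_le_mx_norm.
move=> x; apply/(@cvgrPdist_lt _ _ _ (nbhs x) (nbhs_filter x)) => e e0.
apply/nbhs_ballP; exists (e / C); first by rewrite /= divr_gt0.
move=> y; rewrite -ball_normE /= => xy; apply: le_lt_trans (is_norm_dist _ _) _.
by apply: le_lt_trans (nrmC _) _; rewrite mulrC -ltr_pdivlMr.
Qed.

End is_norm.

Section cylinders.
Context {R : realType} {d : nat}.
Local Notation S := (seqV R d).

Lemma cylinder_preimage_pointwise (g : 'rV[R]_d -> 'rV[R]_d)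
    (A : set (nat -> 'rV[R]_d)) :
  measurable_fun setT (g : borel 'rV[R]_d -> borel 'rV[R]_d) ->
  cylinder A -> cylinder ((fun x j => g (x j)) @^-1` A).
Proof.
move=> mg [m [H [mH ->]]]; exists m, (fun j => g @^-1` H j); split => // j.
by rewrite -[_ @^-1` _]setTI; exact: mg measurableT _ (mH j).
Qed.

Lemma cylinder_measurable (A : set S) : cylinder A -> measurable A.
Proof. exact: sub_sigma_algebra. Qed.

Lemma measurable_sshift : measurable_fun setT (@sshift R d : S -> S).
Proof.
apply: (@measurability _ _ S S setT _ (@cylinder R d)) => //.
move=> _ [_ [m [H [mH ->]]] <-]; rewrite setTI; apply: cylinder_measurable.
exists m.+1, (fun j => if j is j'.+1 then H j' else setT); split.
  by case=> [|j]; [exact: sub_sigma_algebra openT | exact: mH].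
by apply/seteqP; split => x /= xH; [case=> [|j] // /xH | move=> j /(xH j.+1)].
Qed.

Lemma measurable_shiftpre i (B : set S) :
  measurable B -> measurable (shiftpre i B : set S).
Proof.
elim: i B => [//|i IH] B mB.
rewrite (_ : shiftpre i.+1 B = shiftpre i (@sshift R d @^-1` B)) //; apply: IH.
by rewrite -[_ @^-1` _]setTI; exact: measurable_sshift.
Qed.

Lemma measurable_W lo hi (B : set S) :
  measurable B -> measurable (W lo hi B : set S).
Proof.
move=> mB; apply: bigcap_measurableType => i _.
by apply: measurable_shiftpre; exact: measurableC.
Qed.

Lemma measurable_Aj q (B : set S) : measurable B -> measurable (Aj q B : set S).
Proof.
move=> mB; apply: measurableI => //; apply: bigcap_measurableType => i _.
by apply: measurable_shiftpre; exact: measurableC.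
Qed.

End cylinders.

Section radial_rescale.
Context {R : realType} {d : nat} {nrm : 'rV[R]_d -> R}.
Variable u : R -> R.
Hypothesis nrm_norm : is_norm nrm.

(* [uinv u] itself is not monotone, since [fine] sends [+oo] to [0]. *)
Lemma uinv_measurable : measurable_fun setT (uinv u).
Proof.
apply: (measurableT_comp (fine_measurable measurableT)).
apply: nonincreasing_emeasurable => z1 z2 z12; apply: ereal_sup_le.
by move=> _ [t [t0 z2t] <-]; exists t => //; split => //; exact: le_trans z2t.
Qed.

Lemma measurable_radial_rescale :
  measurable_fun setT
    ((fun v => (uinv u (nrm v) / nrm v) *: v) : borel 'rV[R]_d -> borel 'rV[R]_d).
Proof.
apply: measurable_funZ_borel.
apply: (measurableT_comp (f := fun z => uinv u z / z)).
  by apply: measurable_funM; [exact: uinv_measurable | exact: inv_measurable].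
by apply: continuous_borel_measurable; exact: is_norm_continuous.
Qed.

Lemma Anl_cylinder (A : set (nat -> 'rV[R]_d)) :
  cylinder A -> cylinder (Anl nrm u A).
Proof. exact: (cylinder_preimage_pointwise _ _ measurable_radial_rescale). Qed.

End radial_rescale.

Section windows.
Context {R : realType} {d : nat}.
Local Notation V := 'rV[R]_d.

Lemma W_sub_W_Aj (lo hi : int) q (B : set (nat -> V)) :
  W lo hi B `<=` W lo hi (Aj q B).
Proof. by move=> x xW i /xW + []. Qed.

Lemma W_Negz lo h (B : set (nat -> V)) : W lo (Negz h) B = setT.
Proof. by apply/seteqP; split => // x _ i [_ /=]; lia. Qed.

Lemma W_Aj_setD_W lo hi q (B : set (nat -> V)) :
  W lo hi (Aj q B) `\` W lo hi B `<=`
  \big[setU/set0]_(j < q) shiftpre (`|hi| - j.+1)%N B.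
Proof.
move=> x []; case: hi => [h|h] xWA; last by rewrite W_Negz => /(_ I).
move=> /existsNP[i0 /not_implyP[i0_in /contrapT Bi0]].
pose inB i := `[< (lo <= i%:Z /\ i%:Z < h%:Z) /\ shiftpre i B x >].
have inB_le i : inB i -> (i <= h)%N by move=> /asboolP[[_ ?] _]; lia.
have inB_i0 : exists i, inB i by exists i0; exact/asboolP.
have [i /asboolP[i_in Bi] i_max] := ex_maxnP inB_i0 inB_le.
have /not_andP[//|/existsNP[k /not_implyP[/andP[k1 kq] /contrapT Bik]]] :=
  xWA i i_in.
have hik : (h <= k + i)%N.
  rewrite leqNgt; apply/negP => ikh; suff /i_max : inB (k + i) by lia.
  apply/asboolP; split; first by case: i_in => ? ?; split; lia.
  by rewrite /shiftpre /preimage /= iterD.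
rewrite -(bigcup_mkord q (fun j => shiftpre (h - j.+1) B)).
exists (h - i.+1)%N; first by case: i_in => _ /=; lia.
by rewrite (_ : h - (h - i.+1).+1 = i)%N //; case: i_in => _; lia.
Qed.

Lemma bigcap_W_Aj_setD m q (lo hi : nat -> int) (B : nat -> set (nat -> V)) :
  \bigcap_(l < m) W (lo l) (hi l) (Aj q (B l)) `\`
    \bigcap_(l < m) W (lo l) (hi l) (B l) `<=`
  \big[setU/set0]_(l < m) \big[setU/set0]_(j < q) shiftpre (`|hi l| - j.+1)%N (B l).
Proof.
move=> x [xWA /existsNP[l /not_implyP[lm xWB]]].
rewrite -(bigcup_mkord m
  (fun l => \big[setU/set0]_(j < q) shiftpre (`|hi l| - j.+1)%N (B l))).
by exists l => //; apply: W_Aj_setD_W; split; [exact: xWA | exact: xWB].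
Qed.

End windows.

Section stationary.
Variables (R : realType) (d : nat) (P : probability (seqV R d) R).
Hypothesis P_sshift : forall A : set (seqV R d), measurable A ->
  P (@sshift R d @^-1` A) = P A.

Lemma measure_shiftpre i (B : set (seqV R d)) :
  measurable B -> P (shiftpre i B) = P B.
Proof.
elim: i B => [//|i IH] B mB.
rewrite (_ : shiftpre i.+1 B = shiftpre i (@sshift R d @^-1` B)) // IH ?P_sshift //.
by rewrite -[_ @^-1` _]setTI; exact: measurable_sshift.
Qed.

Lemma measure_bigsetU_shiftpre_le q (f : nat -> nat) (B : set (seqV R d)) :
  measurable B ->
  (P (\big[setU/set0]_(j < q) shiftpre (f j) B) <= q%:R%:E * P B)%E.
Proof.
move=> mB.
apply: (@le_trans _ _ (\sum_(j < q) P (shiftpre (f j) B))%E).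
  apply: (@content_subadditive _ _ _ P _ (fun j => shiftpre (f j) B)) => [j _||//].
    exact: measurable_shiftpre.
  by apply: bigsetU_measurable => j _; exact: measurable_shiftpre.
rewrite (eq_bigr (fun=> P B)) => [|j _]; last exact: measure_shiftpre.
by rewrite sumr_const card_ord mule_natl.
Qed.

Lemma W_Aj_measure_bound m q (lo hi : nat -> int) (B : nat -> set (seqV R d)) :
  (forall l, (l < m)%N -> measurable (B l)) ->
  (`| P (\bigcap_(l < m) W (lo l) (hi l) (Aj q (B l)))
      - P (\bigcap_(l < m) W (lo l) (hi l) (B l)) |
   <= q%:R%:E * \sum_(l < m) P (B l))%E.
Proof.
move=> mB.
set X := \bigcap_(l < m) _; set Y := \bigcap_(l < m) _.
have mX : measurable (X : set (seqV R d)).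
  apply: bigcap_measurableType => l lm.
  by apply: measurable_W; apply: measurable_Aj; exact: mB l lm.
have mY : measurable (Y : set (seqV R d)).
  by apply: bigcap_measurableType => l lm; apply: measurable_W; exact: mB l lm.
have -> : (P X - P Y = P (X `\` Y))%E.
  rewrite measureD ?(le_lt_trans (probability_le1 P mX)) ?ltry //.
  by rewrite setIidr // => x Yx l lm; apply: W_sub_W_Aj; exact: Yx.
rewrite gee0_abs ?measure_ge0 // ge0_sume_distrr => [|l _]; last exact: measure_ge0.
pose U l : set (seqV R d) :=
  \big[setU/set0]_(j < q) shiftpre (`|hi l| - j.+1)%N (B l).
apply: (le_trans (@content_subadditive _ _ _ P _ U m _ (measurableD mX mY)
                   (bigcap_W_Aj_setD m q lo hi B))).
  move=> l lm; apply: bigsetU_measurable => j _.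
  by apply: measurable_shiftpre; exact: mB l lm.
apply: lee_sum => l _.
exact: (measure_bigsetU_shiftpre_le _ (fun j => `|hi l| - j.+1)%N _
  (mB l (ltn_ord l))).
Qed.

End stationary.

Theorem proposition3p11 (R : realType) (d : nat) (nrm : 'rV[R]_d -> R)
  (P : probability (seqV R d) R) (u : nat -> R -> R) (k t q : nat -> nat) :
  is_norm nrm ->
  (* stationarity: the sshift is measure preserving *)
  (forall A : set (seqV R d), measurable A ->
     P (@sshift R d @^-1` A) = P A) ->
  (* normalising threshold functions u_n : (0,oo) -> (0,oo) *)
  (forall n tau, 0 < tau -> 0 < u n tau) ->
  (forall n s tau, 0 < s -> s <= tau -> u n tau <= u n s) ->
  (forall n tau, 0 < tau -> u n x @[x --> tau^'-] --> u n tau) ->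
  (forall tau, 0 < tau ->
     ((n%:R)%:E * P [set x : seqV R d | (u n tau < nrm (x 0%N))%R])%E
       @[n --> \oo] --> tau%:E) ->
  (* the sequences k_n, t_n, q_n *)
  (forall n, (0 < k n)%N) -> (forall n, (0 < t n)%N) -> (forall n, (0 < q n)%N) ->
  ((k n)%:R : R) @[n --> \oo] --> +oo ->
  ((t n)%:R : R) @[n --> \oo] --> +oo ->
  ((k n * t n)%:R / n%:R : R) @[n --> \oo] --> 0 ->
  ((n %/ k n)%:R : R) @[n --> \oo] --> +oo ->
  ((q n)%:R / (n %/ k n)%:R : R) @[n --> \oo] --> 0 ->
  forall (m : nat) (A : nat -> set (nat -> 'rV[R]_d)) (a b : nat -> R),
  (0 < m)%N ->
  (forall l, (l < m)%N -> cylinder (A l)) ->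
  (forall l, (l < m)%N -> 0 <= a l /\ a l < b l /\ b l <= 1) ->
  (forall l, (l.+1 < m)%N -> b l <= a l.+1) ->
  forall n : nat, (0 < n)%N ->
  (`| P (\bigcap_(l < m)
           W (Jlo (k n) (n %/ k n) (a l)) (Jhi (k n) (n %/ k n) (b l))
             (Aj (q n) (Anl nrm (u n) (A l))))
      - P (\bigcap_(l < m)
           W (Jlo (k n) (n %/ k n) (a l)) (Jhi (k n) (n %/ k n) (b l))
             (Anl nrm (u n) (A l))) |
   <= (q n)%:R%:E * \sum_(l < m) P (Anl nrm (u n) (A l)))%E.
Proof.
(* The bound holds for each fixed n: only the norm and stationarity matter. *)
move=> nrm_norm P_sshift _ _ _ _ _ _ _ _ _ _ _ _ m A a b _ A_cyl _ _ n _.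
apply: W_Aj_measure_bound => // l lm.
by apply: cylinder_measurable; exact: Anl_cylinder (u n) nrm_norm _ (A_cyl l lm).
Qed.
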